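(* Let $R$ be $\mathbb{Z}$ or $\mathbb{Z}/m\mathbb{Z}$ with $m\ge2$, let $\Lambda$ be a free abelian group with basis $x_1,\ldots,x_n$, and let $\vec r=(r_1,\ldots,r_n)$ be an $n$-tuple in $R[\Lambda]$ satisfying the flatness condition. Then every syzygy of $\vec r$ is trivial.
   Context: $R[\Lambda]$ is identified with $R[x_1^{\pm1},\ldots,x_n^{\pm1}]$; $\Lambda_i=\langle x_1,\ldots,x_i\rangle$. A polynomial $p\in R[\Lambda_i]$ is a divisor with respect to $x_i$ if, writing $p=p_kx_i^k+\cdots+p_mx_i^m$ with $p_j\in R[\Lambda_{i-1}]$ and $p_k\ne0$, $p_k$ is a monic monomial in $x_1,\ldots,x_{i-1}$. $\vec r$ satisfies the flatness condition if $r_i\in R[\Lambda_i]$ and $r_i$ is a divisor with respect to $x_i$ for all $i$. A syzygy of $\vec r$ is $(f_1,\ldots,f_n)\in R[\Lambda]^n$ with $\sum_if_ir_i=0$; it is trivial if it lies in the $R[\Lambda]$-submodule generated by the vectors $S_{ij}$ ($i\ne j$) having $r_j$ in position $i$, $-r_i$ in position $j$, and $0$ elsewhere. *)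

From HB Require Import structures.
From mathcomp Require Import all_boot all_order all_algebra.
From mathcomp Require Import finmap.
From mathcomp.multinomials Require Import monalg.
Set Implicit Arguments. Unset Strict Implicit. Unset Printing Implicit Defensive.
Import Order.TTheory GRing.Theory Num.Theory.
Local Open Scope ring_scope.

(* Exponent vectors: elements of Lambda = Z^n, written additively;
   e i is the exponent of x_(i+1) (variables are 0-indexed by 'I_n). *)
Definition expo (n : nat) := {ffun 'I_n -> int}.

(* The group ring R[Lambda] = R[x_1^{+-1},...,x_n^{+-1}]: finitely supported
   functions Lambda -> R (coefficient of the monomial x^e at e). *)
Definition laurent (R : comNzRingType) (n : nat) := {malg R[expo n]}.

Definition lmono (R : comNzRingType) (n : nat) (e : expo n) : laurent R n := << e >>.

Definition lmul (R : comNzRingType) (n : nat) (p q : laurent R n) : laurent R n :=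
  \sum_(k <- msupp p) \sum_(l <- msupp q) << p@_k * q@_l *g (k + l) >>.

(* R[Lambda_i] where Lambda_i = < x_1, ..., x_i >: with 0-indexed variables,
   only variables of index < i occur. *)
Definition in_sub (R : comNzRingType) (n : nat) (i : nat) (p : laurent R n) : Prop :=
  forall e : expo n, e \in msupp p -> forall j : 'I_n, (i <= j)%N -> e j = 0.

Definition expo_in_sub (n : nat) (i : nat) (e : expo n) : Prop :=
  forall j : 'I_n, (i <= j)%N -> e j = 0.

Definition drop_var (n : nat) (i : 'I_n) (e : expo n) : expo n :=
  [ffun j => if j == i then 0 else e j].

(* For p written as sum_k p_k x_i^k with p_k free of x_i, the coefficient p_k. *)
Definition lslice (R : comNzRingType) (n : nat) (i : 'I_n) (k : int)
    (p : laurent R n) : laurent R n :=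
  \sum_(e <- msupp p | e i == k) << p@_e *g drop_var i e >>.

(* p in R[Lambda_(i+1)] is a divisor with respect to the variable x_(i+1)
   (0-indexed variable i): writing p = p_k x^k + ... + p_m x^m with p_j in
   R[Lambda_i] and p_k <> 0, p_k is a monic (Laurent) monomial in the
   variables of index < i. *)
Definition divisor_wrt (R : comNzRingType) (n : nat) (i : 'I_n) (p : laurent R n) : Prop :=
  exists k : int,
    (forall j : int, j < k -> lslice i j p = 0) /\
    lslice i k p != 0 /\
    exists b : expo n, expo_in_sub i b /\ lslice i k p = lmono R b.

Definition flatness (R : comNzRingType) (n : nat) (r : 'I_n -> laurent R n) : Prop :=
  forall i : 'I_n, in_sub i.+1 (r i) /\ divisor_wrt i (r i).

Definition syzygy (R : comNzRingType) (n : nat) (r : 'I_n -> laurent R n)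
    (f : 'I_n -> laurent R n) : Prop :=
  \sum_(i < n) lmul (f i) (r i) = 0.

(* f lies in the R[Lambda]-submodule generated by the S_ij (i <> j), where
   S_ij has r_j at position i, -r_i at position j, 0 elsewhere:
   f = sum_{i <> j} c_ij S_ij, read coordinatewise. *)
Definition trivial_syzygy (R : comNzRingType) (n : nat) (r : 'I_n -> laurent R n)
    (f : 'I_n -> laurent R n) : Prop :=
  exists c : 'I_n -> 'I_n -> laurent R n,
    forall k : 'I_n,
      f k = \sum_(j < n | j != k) lmul (c k j) (r j)
            - \sum_(i < n | i != k) lmul (c i k) (r i).

Definition all_syzygies_trivial (R : comNzRingType) (n : nat) : Prop :=
  forall r : 'I_n -> laurent R n, flatness r ->
  forall f : 'I_n -> laurent R n, syzygy r f -> trivial_syzygy r f.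

From HB Require Import structures.
From mathcomp Require Import all_boot all_order all_algebra.
From mathcomp Require Import finmap.
From mathcomp.multinomials Require Import monalg.
From mathcomp Require Import ring zify.
Set Implicit Arguments. Unset Strict Implicit. Unset Printing Implicit Defensive.
Import Order.TTheory GRing.Theory Num.Theory.
Local Open Scope ring_scope.

(* The argument works over any commutative ring R.  A sequence r_1, ..., r_n
   such that each r_i is a non-zero-divisor modulo (r_1, ..., r_(i-1)) has
   only trivial syzygies (the first Koszul homology vanishes), by induction on
   n.  Flatness gives exactly this: r_1, ..., r_(i-1) do not involve x_i, so
   the ideal they generate is graded by the x_i-degree, while the lowest
   x_i-degree part of r_i is a unit monomial.  Hence if r_i g lies in the
   ideal, comparing x_i-degree parts shows, by induction from the lowest
   degree of g upwards, that every x_i-degree part of g lies in the ideal. *)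

Section LaurentRing.
Variables (R : comNzRingType) (n : nat).
Local Notation L := (laurent R n).
Local Notation K := (expo n).
Implicit Types p q s : L.

Lemma lmulEw (d1 d2 : {fset K}) p q :
  (msupp p `<=` d1)%fset -> (msupp q `<=` d2)%fset ->
  lmul p q = \sum_(k <- d1) \sum_(l <- d2) << p@_k * q@_l *g (k + l) >>.
Proof.
move=> le_d1 le_d2; rewrite /lmul (big_fset_incl _ le_d1) /=.
  apply/eq_bigr=> k1 _; apply/big_fset_incl => // k _ /mcoeff_outdom ->.
  by rewrite mulr0 monalgU0.
move=> k _ /mcoeff_outdom g1k.
by rewrite big1 => // k' _; rewrite g1k mul0r monalgU0.
Qed.

Lemma lmulUU (c1 c2 : R) (k1 k2 : K) :
  lmul << c1 *g k1 >> << c2 *g k2 >> = << c1 * c2 *g (k1 + k2) >>.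
Proof. by rewrite (lmulEw msuppU_le msuppU_le) !big_seq_fset1 !mcoeffUU. Qed.

Lemma lmul0l p : lmul 0 p = 0.
Proof. by rewrite /lmul msupp0 big_seq_fset0. Qed.

Lemma lmulC p q : lmul p q = lmul q p.
Proof.
rewrite /lmul exchange_big /=; apply/eq_bigr=> k _; apply/eq_bigr=> l _.
by rewrite mulrC addrC.
Qed.

Lemma lmulDl p q s : lmul (p + q) s = lmul p s + lmul q s.
Proof.
rewrite [in RHS](lmulEw (fsubsetUl _ (msupp q)) (fsubset_refl (msupp s))).
rewrite [in RHS](lmulEw (fsubsetUr (msupp p) _) (fsubset_refl (msupp s))).
rewrite (lmulEw (msuppD_le _ _) (fsubset_refl _)) -big_split /=.
apply/eq_bigr=> k1 _; rewrite -big_split /=; apply/eq_bigr=> k2 _.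
by rewrite mcoeffD mulrDl monalgUD.
Qed.

Lemma lmul_suml (I : Type) (r : seq I) (P : pred I) (F : I -> L) q :
  lmul (\sum_(i <- r | P i) F i) q = \sum_(i <- r | P i) lmul (F i) q.
Proof.
apply: (big_rec2 (fun a b => lmul a q = b)) => [|i a b _ <-].
  exact: lmul0l.
exact: lmulDl.
Qed.

Lemma lmul_sumr (I : Type) (r : seq I) (P : pred I) (F : I -> L) q :
  lmul q (\sum_(i <- r | P i) F i) = \sum_(i <- r | P i) lmul q (F i).
Proof. by rewrite lmulC lmul_suml; apply: eq_bigr => i _; apply: lmulC. Qed.

Lemma lmulA p q s : lmul p (lmul q s) = lmul (lmul p q) s.
Proof.
rewrite (monalgE p) !lmul_suml; apply/eq_bigr=> k1 _.
rewrite (monalgE q) !(lmul_suml, lmul_sumr); apply/eq_bigr=> k2 _.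
rewrite (monalgE s) !(lmul_suml, lmul_sumr); apply/eq_bigr=> k3 _.
by rewrite !lmulUU mulrA addrA.
Qed.

Lemma lmul1l p : lmul (lmono R 0) p = p.
Proof.
rewrite /lmono (lmulEw msuppU_le (fsubset_refl _)) big_seq_fset1 [RHS]monalgE.
by apply/eq_bigr=> k _; rewrite mcoeffUU mul1r add0r.
Qed.

Lemma lmono0_neq0 : lmono R (0 : K) != 0.
Proof. by rewrite /lmono monalgU_eq0 oner_eq0. Qed.

(* The multiplication of monalg needs a monoid without nontrivial units, so
   the group ring R[Z^n] gets its own ring structure, on an alias. *)
Definition laurent_ring := laurent R n.
HB.instance Definition _ := GRing.Zmodule.on laurent_ring.
HB.instance Definition _ := GRing.Zmodule_isComNzRing.Build laurent_ring
  lmulA lmulC lmul1l lmulDl lmono0_neq0.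

Lemma laurent_mulE (p q : laurent_ring) : p * q = lmul p q.
Proof. by []. Qed.

Lemma mcoeffMw (d1 d2 : {fset K}) (p q : laurent_ring) e :
  (msupp p `<=` d1)%fset -> (msupp q `<=` d2)%fset ->
  (p * q)@_e = \sum_(k <- d1) \sum_(l <- d2) p@_k * q@_l *+ (k + l == e).
Proof.
move=> le_d1 le_d2; rewrite laurent_mulE (lmulEw le_d1 le_d2) raddf_sum /=.
by apply: eq_bigr => k _; rewrite raddf_sum; apply: eq_bigr => l _; apply: mcoeffU.
Qed.

Lemma lmonoD (x y : K) :
  (lmono R x : laurent_ring) * lmono R y = lmono R (x + y).
Proof. by rewrite laurent_mulE /lmono lmulUU mulr1. Qed.

Lemma lmono0 : lmono R 0 = 1 :> laurent_ring.
Proof. by []. Qed.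

End LaurentRing.

Section RegularSequence.
Variables (A : comNzRingType) (r : nat -> A).

Definition in_ideal (m : nat) (x : A) :=
  exists c : nat -> A, x = \sum_(j < m) c j * r j.

Lemma in_ideal0 m : in_ideal m 0.
Proof. by exists (fun _ => 0); rewrite big1 // => j _; rewrite mul0r. Qed.

Lemma in_idealD m x y : in_ideal m x -> in_ideal m y -> in_ideal m (x + y).
Proof.
move=> [c ->] [d ->]; exists (fun j => c j + d j).
by rewrite -big_split /=; apply: eq_bigr => j _; rewrite mulrDl.
Qed.

Lemma in_idealMl m a x : in_ideal m x -> in_ideal m (a * x).
Proof.
move=> [c ->]; exists (fun j => a * c j).
by rewrite mulr_sumr; apply: eq_bigr => j _; rewrite mulrA.
Qed.

Lemma in_idealB m x y : in_ideal m x -> in_ideal m y -> in_ideal m (x - y).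
Proof. by move=> Ix /(in_idealMl (-1)); rewrite mulN1r; apply: in_idealD. Qed.

Lemma in_ideal_sum m (I : Type) (s : seq I) (P : pred I) (F : I -> A) :
  (forall j, P j -> in_ideal m (F j)) -> in_ideal m (\sum_(j <- s | P j) F j).
Proof.
by move=> IF; apply: big_ind => //; [apply: in_ideal0 | apply: in_idealD].
Qed.

Definition regular_at (m : nat) := forall g, in_ideal m (r m * g) -> in_ideal m g.

Lemma regular_syzygies_trivial n : (forall m, (m < n)%N -> regular_at m) ->
  forall f : nat -> A, \sum_(i < n) f i * r i = 0 ->
  exists c : nat -> nat -> A, forall k, (k < n)%N ->
    f k = \sum_(j < n) c k j * r j - \sum_(i < n) c i k * r i.
Proof.
elim: n => [|n IH] reg f; first by exists (fun _ _ => 0).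
rewrite big_ord_recr /= => f_syz.
have [d fn_d] : in_ideal n (f n).
  apply: reg => //; exists (fun j => - f j).
  move/eqP: f_syz; rewrite addrC addr_eq0 mulrC => /eqP ->.
  by rewrite -sumrN; apply: eq_bigr => i _; rewrite mulNr.
(* subtracting the Koszul syzygies d_i S_(i,n) kills the last coordinate *)
have f'_syz : \sum_(i < n) (f i + d i * r n) * r i = 0.
  rewrite (eq_bigr (fun i : 'I_n => f i * r i + d i * r i * r n)); last first.
    by move=> i _; rewrite mulrDl mulrAC.
  by rewrite big_split /= -mulr_suml -fn_d.
have [c c_f'] :=
  IH (fun m lt_mn => reg m (ltnW lt_mn)) (fun i => f i + d i * r n) f'_syz.
exists (fun i j => if j == n then 0 else if i == n then d j else c i j) => k.
rewrite ltnS leq_eqVlt => /orP [/eqP ->|lt_kn].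
  rewrite eqxx [X in _ - X]big1 ?subr0; last by move=> i _; rewrite mul0r.
  rewrite big_ord_recr /= eqxx mul0r addr0 fn_d; apply: eq_bigr => i _.
  by rewrite ltn_eqF.
rewrite (ltn_eqF lt_kn) big_ord_recr [X in _ - X]big_ord_recr /= eqxx mul0r addr0.
under eq_bigr => j _ do rewrite (ltn_eqF (ltn_ord j)).
under [X in _ - (X + _)]eq_bigr => j _ do rewrite (ltn_eqF (ltn_ord j)).
rewrite opprD addrA -c_f' //; ring.
Qed.

End RegularSequence.

Lemma int_ind_from (P : int -> Prop) (lb : int) :
  (forall t, t < lb -> P t) -> (forall t, (forall s, s < t -> P s) -> P t) ->
  forall t, P t.
Proof.
move=> base step t.
suff IH (N : nat) : forall t, t < lb + N%:Z -> P t by apply: (IH `|t - lb|.+1); lia.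
elim: N => [|N IHN] {}t lt_t; first by apply: base; lia.
by apply: step => s lt_st; apply: IHN; lia.
Qed.

Section DegreePart.
Variables (R : comNzRingType) (n : nat) (i : 'I_n).
Local Notation L := (laurent_ring R n).
Local Notation K := (expo n).
Implicit Types (g h : L) (s t : int).

Definition deg_part t h : L := [malg e in msupp h => h@_e *+ (e i == t)].

Lemma deg_partE t h e : (deg_part t h)@_e = h@_e *+ (e i == t).
Proof. by rewrite /deg_part mcoeffE; case: msuppP => //; rewrite mul0rn. Qed.

Lemma msupp_deg_part t h : (msupp (deg_part t h) `<=` msupp h)%fset.
Proof.
apply/fsubsetP=> e; rewrite -!mcoeff_neq0 deg_partE.
by apply: contraNN => /eqP ->; rewrite mul0rn.
Qed.

Lemma deg_part_is_additive t : zmod_morphism (deg_part t).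
Proof. by move=> g h; apply/malgP=> e; rewrite !(mcoeffB, deg_partE) mulrnBl. Qed.

HB.instance Definition _ t :=
  GRing.isZmodMorphism.Build L L (deg_part t) (deg_part_is_additive t).

Definition homog s h := forall e, e \in msupp h -> e i = s.

Lemma homog_deg_part t h : homog t (deg_part t h).
Proof.
move=> e; rewrite -mcoeff_neq0 deg_partE.
by case: (e i =P t) => // _; rewrite mulr0n eqxx.
Qed.

Lemma deg_partMl s t g h : homog s g -> deg_part t (g * h) = g * deg_part (t - s) h.
Proof.
move=> hom_g; apply/malgP=> e.
rewrite deg_partE (mcoeffMw _ (fsubset_refl _) (fsubset_refl _)).
rewrite (mcoeffMw _ (fsubset_refl _) (msupp_deg_part _ _)).
rewrite -sumrMnl big_seq [RHS]big_seq; apply/eq_bigr=> k /hom_g deg_k.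
rewrite -sumrMnl; apply/eq_bigr=> l _; rewrite deg_partE.
case: (k + l =P e) => [<-|_]; last by rewrite !mulr0n mul0rn.
rewrite !mulr1n ffunE deg_k -mulrnAr.
suff -> : (s + l i == t) = (l i == t - s) by [].
by apply/eqP/eqP => [<-|->]; ring.
Qed.

Lemma sum_deg_part (S : seq int) h : uniq S ->
  (forall e, e \in msupp h -> e i \in S) -> h = \sum_(t <- S) deg_part t h.
Proof.
move=> uniq_S degs_S; apply/malgP=> e; rewrite raddf_sum /=.
under eq_bigr => t _ do rewrite deg_partE.
case: msuppP => [he|_]; last by rewrite big1 // => t _; rewrite mul0rn.
rewrite (bigD1_seq (e i)) ?degs_S //= eqxx mulr1n big1 ?addr0 // => t.
by rewrite eq_sym => /negbTE ->; rewrite mulr0n.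
Qed.

Lemma deg_part_bounded_below h : exists lb, forall t, t < lb -> deg_part t h = 0.
Proof.
exists (- \sum_(e <- msupp h) `|e i|) => t lt_t; apply/malgP=> e.
rewrite deg_partE mcoeff0; case: msuppP => [he|_]; last by rewrite mul0rn.
case: eqP => [eit|]; last by rewrite mulr0n.
have : `|e i| <= \sum_(e' <- msupp h) `|e' i|.
  by rewrite (big_fsetD1 e he) /= lerDl sumr_ge0.
by have := ler_norm (- e i); rewrite normrN eit; lia.
Qed.

Definition var_exp s : K := [ffun j => if j == i then s else 0].

Lemma deg_part_lslice s h : deg_part s h = (lslice i s h : L) * lmono R (var_exp s).
Proof.
rewrite {1}(monalgEw (msupp_deg_part s h)) /lslice mulr_suml [RHS]big_mkcond /=.
apply: eq_bigr => e _; rewrite deg_partE.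
case: (e i =P s) => [eis|_]; last by rewrite mulr0n monalgU0.
rewrite mulr1n laurent_mulE /lmono lmulUU mulr1; congr (<< _ *g _ >>).
apply/ffunP => j; rewrite !ffunE; case: (j =P i) => [->|_]; last by rewrite addr0.
by rewrite eis add0r.
Qed.

End DegreePart.

Section LeadingMonomial.
Variables (R : comNzRingType) (n : nat) (i : 'I_n).
Local Notation L := (laurent_ring R n).
Variables (r : nat -> L) (k : int) (b : expo n).
Hypothesis r_homog : forall j, (j < i)%N -> homog i 0 (r j).
Hypothesis r_below : forall t, t < k -> deg_part i t (r i) = 0.
Hypothesis r_lead : deg_part i k (r i) = lmono R b.

Lemma in_ideal_deg_part t h : in_ideal r i h -> in_ideal r i (deg_part i t h).
Proof.
move=> [c ->]; exists (fun j => deg_part i t (c j)); rewrite raddf_sum /=.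
apply: eq_bigr => j _; rewrite mulrC (deg_partMl _ _ (r_homog (ltn_ord j))).
by rewrite subr0 mulrC.
Qed.

Lemma in_ideal_deg_part_step g t : in_ideal r i (r i * g) ->
  (forall s, s < t -> in_ideal r i (deg_part i s g)) ->
  in_ideal r i (deg_part i t g).
Proof.
move=> Irg IH.
pose S := undup (k :: [seq e i | e : expo n <- msupp (r i)]).
have kS : k \in S by rewrite mem_undup inE eqxx.
have degs_S e : e \in msupp (r i) -> e i \in S.
  by move=> he; rewrite mem_undup inE (map_f (fun e : expo n => e i)) ?orbT.
(* the x_i-degree (t + k) part of r_i g is x^b g_t plus terms r_(i,s) g_(t+k-s)
   with s > k, since r_i has no part of degree below k *)
have := in_ideal_deg_part (t + k) Irg.
rewrite (sum_deg_part (undup_uniq _) degs_S) mulr_suml raddf_sum /=.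
under eq_bigr => s _ do rewrite (deg_partMl _ _ (@homog_deg_part _ _ i s (r i))).
rewrite (bigD1_seq k kS (undup_uniq _)) /= r_lead addrK => Irest.
have Ibg : in_ideal r i ((lmono R b : L) * deg_part i t g).
  rewrite -[X in in_ideal _ _ X](addrK (\sum_(s <- S | s != k)
    deg_part i s (r i) * deg_part i (t + k - s) g)).
  apply: in_idealB => //; apply: in_ideal_sum => s neq_sk.
  have [lt_sk|le_ks] := ltP s k; first by rewrite r_below // mul0r; apply: in_ideal0.
  by apply/in_idealMl/IH; move: neq_sk le_ks; rewrite eq_sym; lia.
have := in_idealMl (lmono R (- b) : L) Ibg.
by rewrite mulrA lmonoD addNr lmono0 mul1r.
Qed.

Lemma regular_at_lead_monomial : regular_at r i.
Proof.
move=> g Irg; have [lb g_below] := deg_part_bounded_below i g.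
have uniq_degs := undup_uniq [seq e i | e : expo n <- msupp g].
rewrite [g](sum_deg_part (i := i) uniq_degs); last first.
  by move=> e he; rewrite mem_undup (map_f (fun e : expo n => e i)).
apply: in_ideal_sum => t _; move: t.
apply: (int_ind_from (lb := lb)) => [t /g_below ->|t IH].
  exact: in_ideal0.
exact: in_ideal_deg_part_step.
Qed.

End LeadingMonomial.

Lemma sumrB_bigD1 (V : zmodType) (m : nat) (k : 'I_m) (F G : 'I_m -> V) :
  F k = G k ->
  \sum_(j < m) F j - \sum_(i < m) G i =
  \sum_(j < m | j != k) F j - \sum_(i < m | i != k) G i.
Proof.
move=> FG; rewrite (bigD1 k) // [X in _ - X](bigD1 k) // FG.
by rewrite opprD addrACA subrr add0r.
Qed.

Section Flatness.
Variables (R : comNzRingType) (n : nat).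
Local Notation L := (laurent_ring R n).

(* Extension by 0 beyond n, to feed the nat-indexed Koszul induction. *)
Definition ord_ext (F : 'I_n -> laurent R n) (m : nat) : L :=
  if insub m is Some j then F j else 0.

Lemma ord_extE F (j : 'I_n) : ord_ext F j = F j.
Proof. by rewrite /ord_ext valK. Qed.

Lemma flatness_regular_at r :
  flatness r -> forall m, (m < n)%N -> regular_at (ord_ext r) m.
Proof.
move=> flat_r m lt_mn.
have [_ [k [r_below [_ [b [_ r_lead]]]]]] := flat_r (Ordinal lt_mn).
apply: (@regular_at_lead_monomial R n (Ordinal lt_mn) _ k (b + var_exp _ k)).
- move=> j lt_jm; have lt_jn := ltn_trans lt_jm lt_mn.
  rewrite -[j]/(val (Ordinal lt_jn)) ord_extE => e he.
  by have [r_sub _] := flat_r (Ordinal lt_jn); apply: (r_sub e he (Ordinal lt_mn)).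
- by move=> t lt_tk; rewrite ord_extE deg_part_lslice r_below // mul0r.
- by rewrite ord_extE deg_part_lslice r_lead lmonoD.
Qed.

Lemma flat_syzygies_trivial : all_syzygies_trivial R n.
Proof.
move=> r flat_r f syz_f.
have syz_ext : \sum_(i < n) ord_ext f i * ord_ext r i = 0.
  by rewrite -[RHS]syz_f; apply: eq_bigr => i _; rewrite !ord_extE.
have [c c_f] := regular_syzygies_trivial (flatness_regular_at flat_r) syz_ext.
exists (fun i j : 'I_n => c i j) => k.
have := c_f k (ltn_ord k); rewrite ord_extE => ->.
rewrite (sumrB_bigD1 (k := k)); last by [].
under eq_bigr => j _ do rewrite ord_extE.
by under [X in _ - X]eq_bigr => i _ do rewrite ord_extE.
Qed.

End Flatness.

Theorem lemma2p8 :
  (forall n : nat, all_syzygies_trivial int n) /\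
  (forall m : nat, (1 < m)%N -> forall n : nat, all_syzygies_trivial 'Z_m n).
Proof. by split=> [n|m _ n]; apply: flat_syzygies_trivial. Qed.
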